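(* Let $w_0\in\mathbb{N}$ and $w=(w_1,\dots,w_n)\in\mathbb{N}^n$ with each $w_i\le 2^{n^2}$, let $M=cn$ for a sufficiently large absolute constant $c>0$, let $\lambda=M\|w\|_2$, and define $p_W(x)=\left(\sum_{i=1}^n w_ix_i-w_0\right)^2+\lambda\sum_{i=1}^n x_i(1-x_i)$, $f_W(x)=\mathrm{sign}(\tfrac12-p_W(x))$, and $\beta_n=\frac{1}{2\|w\|_2}\left(\sqrt{M^2+2}-M\right)$. Let $x\in[0,1]^n$ be at $\ell_1$ distance at most $\beta_n$ from some $z\in\{0,1\}^n$. If $w\cdot z=w_0$, then $f_W(x)=1$.
   Context: $\mathrm{sign}(0)=1$; $\|w\|_2$ is the Euclidean norm. *)

From mathcomp Require Import all_boot all_order all_algebra.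
From mathcomp Require Import reals.
Set Implicit Arguments. Unset Strict Implicit. Unset Printing Implicit Defensive.
Import Order.TTheory GRing.Theory Num.Theory.
Local Open Scope ring_scope.

(* sign with the convention sign(0) = 1 *)
Definition sign {R : realType} (t : R) : R := if 0 <= t then 1 else -1.

Definition norm2 {R : realType} {n : nat} (w : 'I_n -> nat) : R :=
  Num.sqrt (\sum_(i < n) ((w i)%:R : R) ^+ 2).

Definition dist1 {R : realType} {n : nat} (x y : 'I_n -> R) : R :=
  \sum_(i < n) `|x i - y i|.

Definition pW {R : realType} {n : nat} (M : R) (w0 : nat) (w : 'I_n -> nat)
  (x : 'I_n -> R) : R :=
  (\sum_(i < n) (w i)%:R * x i - w0%:R) ^+ 2
  + (M * norm2 w) * \sum_(i < n) x i * (1 - x i).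

Definition fW {R : realType} {n : nat} (M : R) (w0 : nat) (w : 'I_n -> nat)
  (x : 'I_n -> R) : R := sign (2^-1 - pW M w0 w x).

Definition beta {R : realType} {n : nat} (M : R) (w : 'I_n -> nat) : R :=
  (2 * norm2 w)^-1 * (Num.sqrt (M ^+ 2 + 2) - M).

From mathcomp Require Import all_boot all_order all_algebra.
From mathcomp Require Import reals.
From mathcomp Require Import ring lra.
Import Order.TTheory GRing.Theory Num.Theory.
Local Open Scope ring_scope.

(* If w.z = w0 then w.x - w0 = w.(x - z), so the squared term of p_W is
   at most (||w|| d)^2 with d the l1 distance from x to z, while the penalty
   term is at most lambda d since x_i(1 - x_i) <= |x_i - z_i|.  Hence
   p_W(x) <= t^2 + M t with t = ||w|| d, and beta_n is exactly the value of d
   at which t^2 + M t reaches 1/2.  This works for every M >= 0. *)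

Section PenaltyBound.

Variable R : realType.

Section Weights.

Variables (n : nat) (w : 'I_n -> nat).

Lemma norm2_ge0 : 0 <= norm2 w :> R.
Proof. exact: sqrtr_ge0. Qed.

Lemma ler_nat_norm2 (i : 'I_n) : (w i)%:R <= norm2 w :> R.
Proof.
rewrite /norm2 -[X in X <= _]ger0_norm ?ler0n // -sqrtr_sqr.
apply: ler_wsqrtr; rewrite (bigD1 i) //= lerDl.
by apply: sumr_ge0 => j _; exact: sqr_ge0.
Qed.

Lemma dist1_ge0 (x y : 'I_n -> R) : 0 <= dist1 x y.
Proof. by apply: sumr_ge0 => i _; exact: normr_ge0. Qed.

Lemma norm_weighted_sum_le (x y : 'I_n -> R) :
  `|\sum_(i < n) (w i)%:R * (x i - y i)| <= norm2 w * dist1 x y.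
Proof.
rewrite /dist1 mulr_sumr; apply: (le_trans (ler_norm_sum _ _ _)).
apply: ler_sum => i _; rewrite normrM ger0_norm ?ler0n //.
by apply: ler_wpM2r; [exact: normr_ge0 | exact: ler_nat_norm2].
Qed.

Lemma mul_norm2_le_of_le_beta (M : R) (x y : 'I_n -> R) : 0 <= M ->
  dist1 x y <= beta M w -> norm2 w * dist1 x y <= (Num.sqrt (M ^+ 2 + 2) - M) / 2.
Proof.
move=> M_ge0 le_beta.
have [norm0|normN0] := eqVneq (norm2 w : R) 0.
  rewrite norm0 mul0r divr_ge0 // subr_ge0 -[X in X <= _]ger0_norm //.
  by rewrite -sqrtr_sqr ler_wsqrtr // lerDl.
apply: (le_trans (ler_wpM2l norm2_ge0 le_beta)); rewrite /beta.
by rewrite le_eqVlt; apply/orP; left; apply/eqP; field.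
Qed.

End Weights.

Lemma mul_compl_le_dist (t : R) (b : bool) :
  0 <= t <= 1 -> t * (1 - t) <= `|t - b%:R|.
Proof.
move=> /andP[t_ge0 t_le1]; case: b => /=.
  by rewrite ler0_norm; [nra | lra].
by rewrite subr0 ger0_norm //; nra.
Qed.

Lemma sum_mul_compl_le_dist1 (n : nat) (x : 'I_n -> R)
    (z : 'I_n -> bool) :
  (forall i, 0 <= x i <= 1) ->
  \sum_(i < n) x i * (1 - x i) <= dist1 x (fun i => (z i)%:R).
Proof. by move=> x01; apply: ler_sum => i _; exact: mul_compl_le_dist. Qed.

Lemma quadratic_le_half (M t : R) : 0 <= M -> 0 <= t ->
  t <= (Num.sqrt (M ^+ 2 + 2) - M) / 2 -> t ^+ 2 + M * t <= 2^-1.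
Proof.
move=> M_ge0 t_ge0 t_le.
set s := Num.sqrt _ in t_le.
have s2 : s ^+ 2 = M ^+ 2 + 2 by rewrite sqr_sqrtr // addr_ge0 ?sqr_ge0.
have root : ((s - M) / 2) ^+ 2 + M * ((s - M) / 2) = 2^-1.
  have -> : ((s - M) / 2) ^+ 2 + M * ((s - M) / 2) = (s ^+ 2 - M ^+ 2) / 4.
    by field.
  by rewrite s2; field.
by rewrite -root; nra.
Qed.

Lemma pW_le_half (n : nat) (M : R) (w0 : nat) (w : 'I_n -> nat)
    (x : 'I_n -> R) (z : 'I_n -> bool) :
  0 <= M -> (forall i, 0 <= x i <= 1) ->
  dist1 x (fun i => (z i)%:R) <= beta M w ->
  (\sum_(i < n) w i * z i)%N = w0 ->
  pW M w0 w x <= 2^-1.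
Proof.
move=> M_ge0 x01 le_beta sum_wz.
set d := dist1 _ _ in le_beta; set t := norm2 w * d.
have t_ge0 : 0 <= t by rewrite mulr_ge0 ?norm2_ge0 ?dist1_ge0.
have dev : `|\sum_(i < n) (w i)%:R * x i - w0%:R| <= t.
  rewrite -sum_wz natr_sum -sumrB.
  under eq_bigr => i _ do rewrite natrM -mulrBr.
  exact: norm_weighted_sum_le.
have sq_le : (\sum_(i < n) (w i)%:R * x i - w0%:R) ^+ 2 <= t ^+ 2.
  by rewrite -real_normK ?num_real // lerXn2r ?nnegrE ?normr_ge0.
have pen_le : M * norm2 w * \sum_(i < n) x i * (1 - x i) <= M * t.
  rewrite -mulrA ler_wpM2l // ler_wpM2l ?norm2_ge0 //.
  exact: sum_mul_compl_le_dist1.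
have pW_le : pW M w0 w x <= t ^+ 2 + M * t by exact: lerD.
apply: le_trans pW_le (quadratic_le_half _ _ M_ge0 t_ge0 _).
exact: mul_norm2_le_of_le_beta.
Qed.

Lemma fW_eq1 (n : nat) (M : R) (w0 : nat) (w : 'I_n -> nat)
    (x : 'I_n -> R) :
  pW M w0 w x <= 2^-1 -> fW M w0 w x = 1.
Proof. by rewrite /fW /sign subr_ge0 => ->. Qed.

End PenaltyBound.

Theorem claim5p10 (R : realType) :
  exists c0 : R, 0 < c0 /\
  forall (c : R), c0 <= c ->
  forall (n : nat) (w0 : nat) (w : 'I_n -> nat),
    (forall i, (w i <= 2 ^ (n * n))%N) ->
  forall (x : 'I_n -> R) (z : 'I_n -> bool),
    (forall i, 0 <= x i <= 1) ->
    dist1 x (fun i => (z i)%:R) <= beta (c * n%:R) w ->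
    (\sum_(i < n) w i * z i)%N = w0 ->
    fW (c * n%:R) w0 w x = 1.
Proof.
exists 1; split => // c c_ge1 n w0 w _ x z x01 le_beta sum_wz.
apply: fW_eq1; apply: pW_le_half x01 le_beta sum_wz.
by rewrite mulr_ge0 ?ler0n //; lra.
Qed.
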